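(* Let $n\ge 1$. The map $\phi$ described below is a well-defined bijection from $\mathcal{I}_n(\underline{000})$ onto the disjoint union $\overline{\mathcal{D}}_n\sqcup\overline{\mathcal{D}}_{n-1}$. In particular, $|\mathcal{I}_n(\underline{000})|=\overline{d}_n+\overline{d}_{n-1}=(n!-d_n)+((n-1)!-d_{n-1})$. Definition of $\phi$. Let $e=e_1e_2\dots e_n\in\mathcal{I}_n(\underline{000})$. First define a word $w=w_2\dots w_n$ by, for $2\le k\le n$: $w_k=R$ if $e_k=e_{k-1}$; $w_k=e_k$ if $e_k>e_{k-1}$; $w_k=e_k+1$ if $e_k<e_{k-1}$. (Here $R$ is a new symbol; use the convention that $w_1\neq R$.) Next define permutations $\sigma_1,\dots,\sigma_n$: set $\sigma_1=1\in\overline{\mathcal{D}}_1$. For $k=2,\dots,n$: if $w_k=R$, set $\sigma_k=\sigma_{k-1}$ (regarded as an element of $\overline{\mathcal{D}}_{k-1}$). If $w_k\neq R$, then $$\sigma_k=\begin{cases}(w_k,k)\,\sigma_{k-1} & \text{if } w_{k-1}\neq R \text{ and } \sigma_{k-1}\in\overline{\mathcal{D}}_{k-1}\text{ has a fixed point different from } w_k,\\ (w_k,k-1)\,\sigma_{k-1} & \text{otherwise,}\end{cases}$$ where on the right-hand side $\sigma_{k-1}$ is viewed as an element of $\mathfrak{S}_k$ (by adding fixed points), and $\sigma_k$ is regarded as an element of $\overline{\mathcal{D}}_k$. Finally $\phi(e)=\sigma_n$, regarded as an element of $\overline{\mathcal{D}}_n$ if $w_n\neq R$ and of $\overline{\mathcal{D}}_{n-1}$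 if $w_n=R$.
   Context: $\mathfrak{S}_n$ is the set of permutations of $[n]=\{1,\dots,n\}$; $\mathfrak{S}_{m}$ is viewed as the subset of $\mathfrak{S}_n$ ($m\le n$) of permutations fixing $m+1,\dots,n$. A fixed point of $\pi$ is $i$ with $\pi(i)=i$. A derangement is a permutation with no fixed points; $d_n$ is the number of derangements in $\mathfrak{S}_n$ (with $d_0=1$). $\overline{\mathcal{D}}_n$ is the set of permutations in $\mathfrak{S}_n$ having at least one fixed point, and $\overline{d}_n=|\overline{\mathcal{D}}_n|=n!-d_n$ (so $\overline{\mathcal{D}}_0=\emptyset$). An inversion sequence of length $n$ is an integer sequence $e_1\dots e_n$ with $0\le e_i<i$ for all $i$; $\mathcal{I}_n(\underline{000})$ is the set of those with no $i\in[n-2]$ such that $e_i=e_{i+1}=e_{i+2}$. For $1\le a,b\le n$, $(a,b)$ denotes the permutation of $[n]$ exchanging $a$ and $b$ (the identity if $a=b$), and $(a,b)\sigma$ is the composition, i.e. the one-line notation of $\sigma$ with the values $a$ and $b$ swapped. *)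

From mathcomp Require Import all_boot all_order all_fingroup.
Set Implicit Arguments.
Unset Strict Implicit.
Unset Printing Implicit Defensive.

Section Defs.
Variable n : nat.

(* An inversion sequence of length n is stored as e : n.-tuple 'I_n;
   1-based value e_k is  ev e k = nth 0 (map val e) k.-1. *)
Definition ev (e : n.-tuple 'I_n) (k : nat) : nat := nth 0 (map val e) k.-1.

Definition I000 : {set n.-tuple 'I_n} :=
  [set e | [forall k : 'I_n, ev e k.+1 < k.+1] &&
           [forall k : 'I_n, (k.+3 <= n) ==>
              ~~ ((ev e k.+1 == ev e k.+2) && (ev e k.+2 == ev e k.+3))]].

(* The word w: None encodes the symbol R; convention w_1 <> R. *)
Definition w (e : n.-tuple 'I_n) (k : nat) : option nat :=
  if k <= 1 then Some 0 else
  let a := ev e k in let b := ev e k.-1 in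
  if a == b then None else if b < a then Some a else Some a.+1.

Definition tr (a b : nat) : {perm 'I_n} :=
  match @insub _ (fun i => i < n) 'I_n a.-1, @insub _ (fun i => i < n) 'I_n b.-1 with
  | Some x, Some y => tperm x y
  | _, _ => 1%g
  end.

Definition hasfix (s : {perm 'I_n}) (m a : nat) : bool :=
  [exists i : 'I_n, [&& i < m, s i == i & i.+1 != a]].

(* sigma e k = sigma_k, viewed in S_n (fixing k+1..n).
   (a,b) sigma  (apply sigma, then swap) is  sigma * tr a b  in MathComp. *)
Fixpoint sigma (e : n.-tuple 'I_n) (k : nat) : {perm 'I_n} :=
  match k with
  | 0 | 1 => 1%g
  | k'.+1 =>
      let s := sigma e k' in
      match w e k with
      | None => s
      | Some a =>
          if (w e k' != None) && hasfix s k' a then (s * tr a k)%g else (s * tr a k')%g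
      end
  end.

(* phi e = (true, s) encodes s in Dbar_n, (false, s) encodes s in Dbar_{n-1}
   (viewed inside S_n as a permutation fixing n). *)
Definition phi (e : n.-tuple 'I_n) : bool * {perm 'I_n} :=
  (w e n != None, sigma e n).

Definition Dbar_union : {set bool * {perm 'I_n}} :=
  [set p : bool * {perm 'I_n} | if p.1 then [exists i : 'I_n, p.2 i == i]
           else [forall i : 'I_n, (n.-1 <= i) ==> (p.2 i == i)] &&
                [exists i : 'I_n, (i < n.-1) && (p.2 i == i)]].

End Defs.

Definition d (m : nat) : nat := #|[set s : {perm 'I_m} | [forall i, s i != i]]|.

(* phi iterates one step: from the state reached after e_1 .. e_(k-1), an
   element of Dbar_(k-1) + Dbar_(k-2), and the letter w_k, it produces an element
   of Dbar_k + Dbar_(k-1), and this step is a bijection from admissible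
   (state, letter) pairs onto the next level.  The image t(k) of the new point
   tells whether the transposition (w_k, k) was used.  If it was not, then
   t = (w_k, k-1) sigma, and sigma lies in Dbar_(k-2) exactly when swapping back
   t(k-1) and k-1 leaves a fixed point below k-1; otherwise the only fixed point
   of sigma below k is the preimage of k-1.  Since e_(k-1) and w_k determine e_k,
   and every admissible letter extends a prefix of a sequence of I_n(000)
   (completed by an alternating 0/1 tail), induction on k gives the bijection.
   The count follows from |Dbar_n| = n! - d_n and from lifting S_(n-1) onto the
   stabiliser of n in S_n. *)

From mathcomp Require Import all_boot all_order all_fingroup.
From mathcomp Require Import zify.
Set Implicit Arguments.
Unset Strict Implicit.
Unset Printing Implicit Defensive.

Definition swapn (x y z : nat) : nat := if z == x then y else if z == y then x else z.

Variant swapn_spec x y z : nat -> Prop :=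
  | SwapnL of z = x : swapn_spec x y z y
  | SwapnR of z <> x & z = y : swapn_spec x y z x
  | SwapnId of z <> x & z <> y : swapn_spec x y z z.

Lemma swapnP x y z : swapn_spec x y z (swapn x y z).
Proof. by rewrite /swapn; case: eqP => zx; [|case: eqP => zy]; constructor. Qed.

Ltac swapn_lia :=
  repeat match goal with H : context [swapn _ _ _] |- _ =>
    match type of H with _ = _ => move: H | ~ _ => move: H end end;
  repeat match goal with |- context [swapn ?x ?y ?z] => case: (swapnP x y z) end;
  lia.

Lemma swapnK x y : involutive (swapn x y).
Proof. move=> z; swapn_lia. Qed.

Definition fixed_from (f : nat -> nat) k := forall i, k <= i -> f i = i.
Definition fixpoint_below (f : nat -> nat) k := exists2 i, i < k & f i = i.
Definition sole_fixpoint_below (f : nat -> nat) k a :=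
  [/\ a < k, f a = a & forall i, i < k -> f i = i -> i = a].
(* For the permutation t made by a step that does not move the new point M.+1,
   this holds iff the previous state was of the lower kind (in Dbar_M). *)
Definition low_origin (t : nat -> nat) M := fixpoint_below (swapn (t M) M \o t) M.

Lemma fixed_fromW f k k' : k <= k' -> fixed_from f k -> fixed_from f k'.
Proof. by move=> kk' fk i ki; apply: fk; apply: leq_trans ki. Qed.

Lemma fixed_fromS f k : f k = k -> fixed_from f k.+1 -> fixed_from f k.
Proof. by move=> fk fk1 i; rewrite leq_eqVlt => /predU1P[<-|/fk1]. Qed.

Lemma fixpoint_belowP f k : reflect (fixpoint_below f k) (has (fun i => f i == i) (iota 0 k)).
Proof.
apply: (iffP hasP) => [[i] | [i ik /eqP fi]]; last by exists i; rewrite ?mem_iota.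
by rewrite mem_iota => ik /eqP fi; exists i.
Qed.

Lemma fixed_from_lt f k i : injective f -> fixed_from f k -> i < k -> f i < k.
Proof.
move=> f_inj fk ik; rewrite ltnNge; apply/negP => kfi.
by have /f_inj := fk _ kfi; lia.
Qed.

Section SwapFixedPoints.
Variables (f g : nat -> nat) (A M : nat).
Hypothesis f_inj : injective f.
Hypothesis gE : g =1 swapn A M \o f.

Lemma swapn_fixed_from : A <= M -> fixed_from f M.+1 -> fixed_from g M.+1.
Proof. move=> AM fM i Mi; rewrite gE /= fM //; swapn_lia. Qed.

Lemma swapn_fixpoint i : i <> A -> i <> M -> f i = i -> g i = i.
Proof. move=> iA iM fi; rewrite gE /= fi; swapn_lia. Qed.

Lemma low_origin_encode : fixed_from f M -> fixpoint_below f M ->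
  g M = A /\ low_origin g M.
Proof.
move=> fM [j jM fj]; have gM : g M = A by rewrite gE /= fM //; swapn_lia.
by split=> //; exists j => //=; rewrite gM gE /= swapnK.
Qed.

Lemma low_origin_decode : f M = A -> fixed_from f M.+1 -> low_origin f M ->
  fixed_from g M /\ fixpoint_below g M.
Proof.
move=> fMA fM [j jM fj]; have AM : A <= M by rewrite -fMA -ltnS fixed_from_lt.
split; last by exists j; rewrite // gE -fMA.
move=> i; rewrite leq_eqVlt => /predU1P[<-|]; last exact: swapn_fixed_from.
rewrite gE /= fMA; swapn_lia.
Qed.

Lemma high_origin_encode : fixed_from f M.+1 -> sole_fixpoint_below f M.+1 A ->
  g A = M /\ ~ low_origin g M.
Proof.
move=> fM [AM fA fixA]; split; first by rewrite gE /= fA; swapn_lia.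
case=> j jM; rewrite /= !gE /=.
have fjA : f j = A <-> j = A by split=> [|->//]; rewrite -{1}fA => /f_inj.
have fMA : f M = A <-> M = A by split=> [|->//]; rewrite -{1}fA => /f_inj.
have fjM : f j = f M -> j = M by move/f_inj.
have fixj := fixA j (ltnW jM); have fixM := fixA M (ltnSn M).
have := fixed_from_lt f_inj fM (ltnSn M).
swapn_lia.
Qed.

Lemma high_origin_decode : fixed_from f M.+1 -> ~ low_origin f M -> f A = M ->
  fixed_from g M.+1 /\ sole_fixpoint_below g M.+1 A.
Proof.
move=> fM nlow fA.
have AM : A <= M by rewrite leqNgt; apply/negP => MA; have := fM A MA; lia.
have gA : g A = A by rewrite gE /= fA; swapn_lia.
split; first exact: swapn_fixed_from.
split=> // j; rewrite ltnS => jM; rewrite gE /=.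
have lowA : A < M -> f M <> A.
  by move=> AltM fMA; apply: nlow; exists A => //=; rewrite fMA fA; swapn_lia.
have [->|jltM] := eqVneq j M.
  have fMM : f M = M -> A = M by move=> e; apply: esym; apply: f_inj; rewrite e.
  swapn_lia.
have fjM : f j = M <-> j = A by split=> [e|->//]; apply: f_inj; rewrite e.
have lowj : f j <> j.
  move=> fj; apply: nlow; exists j => /=; first lia.
  have : f M <> j by rewrite -fj => /f_inj; lia.
  rewrite fj; swapn_lia.
swapn_lia.
Qed.

End SwapFixedPoints.

Section Permn.
Variable n : nat.

(* Positions are 0-based here while letters and the arguments of [tr] are
   1-based, whence the shifts [a.-1] below. *)
Definition permn (s : {perm 'I_n}) (i : nat) : nat :=
  if insub i is Some o then val (s o) else i.

Lemma permnE s (o : 'I_n) : permn s o = s o.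
Proof. by rewrite /permn valK. Qed.

Lemma permn_out s i : n <= i -> permn s i = i.
Proof. by move=> ni; rewrite /permn insubF // ltnNge ni. Qed.

Lemma permn_lt s i : i < n -> permn s i < n.
Proof. by move=> lt_in; rewrite -[i]/(val (Ordinal lt_in)) permnE. Qed.

Lemma permn_inj s : injective (permn s).
Proof.
move=> i j; case: (ltnP i n) => [lt_in|ni]; case: (ltnP j n) => [lt_jn|nj].
- rewrite -[i]/(val (Ordinal lt_in)) -[j]/(val (Ordinal lt_jn)) !permnE.
  by move/val_inj/perm_inj => ->.
- by rewrite (permn_out _ nj) => eij; have := permn_lt s lt_in; lia.
- by rewrite (permn_out _ ni) => eij; have := permn_lt s lt_jn; lia.
- by rewrite (permn_out _ ni) (permn_out _ nj).
Qed.

Lemma permn_onto s j : j < n -> exists i, permn s i = j.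
Proof. by move=> lt_jn; exists ((s^-1)%g (Ordinal lt_jn)); rewrite permnE permKV. Qed.

Lemma permn1 : permn 1 =1 id.
Proof.
move=> i; case: (ltnP i n) => [lt_in|]; last exact: permn_out.
by rewrite -[i]/(val (Ordinal lt_in)) permnE perm1.
Qed.

Lemma permn_fixed_from_1 s : fixed_from (permn s) 1 -> s = 1%g.
Proof.
move=> s1; apply/permP => o; apply: val_inj; rewrite perm1 /= -permnE.
case: (posnP o) => [->|/s1 //].
by have := fixed_from_lt (@permn_inj s) s1 (ltn0Sn 0); lia.
Qed.

Lemma permn_tr s a b : 0 < a <= n -> 0 < b <= n ->
  permn (s * tr n a b) =1 swapn a.-1 b.-1 \o permn s.
Proof.
move=> /andP[a0 an] /andP[b0 bn] i /=.
have a1n : a.-1 < n by lia.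
have b1n : b.-1 < n by lia.
rewrite /tr (insubT (fun i => i < n) a1n) (insubT (fun i => i < n) b1n).
case: (ltnP i n) => [lt_in|ni]; last by rewrite !permn_out //; swapn_lia.
rewrite -[i]/(val (Ordinal lt_in)) !permnE permM.
case: tpermP => [->|->|ia ib]; rewrite /swapn /= ?eqxx //.
  by case: eqP => [->|].
have ia' : val (s (Ordinal lt_in)) != a.-1 by apply/eqP => h; apply/ia/val_inj.
have ib' : val (s (Ordinal lt_in)) != b.-1 by apply/eqP => h; apply/ib/val_inj.
by rewrite (negbTE ia') (negbTE ib').
Qed.

Lemma mul_trK s a b : (s * tr n a b * tr n a b)%g = s.
Proof.
rewrite /tr; case: (@insub _ (fun i => i < n) 'I_n a.-1) => [x|];
  case: (@insub _ (fun i => i < n) 'I_n b.-1) => [y|]; rewrite ?mulg1 //.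
by rewrite -mulgA tperm2 mulg1.
Qed.

Lemma hasfixP s m a : m <= n ->
  reflect (exists i, [/\ i < m, permn s i = i & i.+1 != a]) (hasfix s m a).
Proof.
move=> mn; apply: (iffP existsP) => [[i /and3P[im /eqP si ia]]|[i [im si ia]]].
  by exists i; rewrite permnE si.
have lt_in : i < n by lia.
by exists (Ordinal lt_in); rewrite im ia -(inj_eq val_inj) /= -permnE si eqxx.
Qed.

Lemma sole_fixpointP s m a : m <= n -> 0 < a -> fixpoint_below (permn s) m ->
  sole_fixpoint_below (permn s) m a.-1 <-> ~~ hasfix s m a.
Proof.
move=> mn a0 [j jm sj]; split.
  case=> _ _ fix1; apply/(hasfixP _ _ mn) => -[i [im si ia]].
  by have := fix1 i im si; lia.
move/(hasfixP _ _ mn) => nfix.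
have fix1 i : i < m -> permn s i = i -> i = a.-1.
  by move=> im si; case: (eqVneq i.+1 a) => [<- //|ia]; case: nfix; exists i.
by split=> //; rewrite -(fix1 j jm sj).
Qed.

Lemma permn_fixed_fromP s k :
  reflect (fixed_from (permn s) k) [forall i : 'I_n, (k <= i) ==> (s i == i)].
Proof.
apply: (iffP forallP) => [sk i ki | sk i].
  case: (ltnP i n) => [lt_in|]; last exact: permn_out.
  have /implyP/(_ ki)/eqP si := sk (Ordinal lt_in).
  by rewrite -[i]/(val (Ordinal lt_in)) permnE si.
by apply/implyP => /sk; rewrite permnE => /val_inj ->.
Qed.

Lemma permn_fixpoint_belowP s k : k <= n ->
  reflect (fixpoint_below (permn s) k) [exists i : 'I_n, (i < k) && (s i == i)].
Proof.
move=> kn; apply: (iffP existsP) => [[i /andP[ik /eqP si]] | [i ik si]].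
  by exists i; rewrite // permnE si.
have lt_in : i < n by lia.
by exists (Ordinal lt_in); rewrite ik -(inj_eq val_inj) /= -permnE si eqxx.
Qed.

End Permn.

Section Step.
Variable n : nat.
Implicit Types (s : {perm 'I_n}) (p q : bool * {perm 'I_n}).

(* As in [phi]: (true, s) stands for s in Dbar_k, (false, s) for s in Dbar_(k-1). *)
Definition state k p :=
  let m := if p.1 then k else k.-1 in
  fixed_from (permn p.2) m /\ fixpoint_below (permn p.2) m.

Definition letter_ok k p (x : option nat) := if x is Some a then 0 < a < k else p.1.

Definition step M p (x : option nat) : {perm 'I_n} :=
  if x is Some a then
    if p.1 && hasfix p.2 M.+1 a then (p.2 * tr n a M.+2)%g else (p.2 * tr n a M.+1)%g
  else p.2.

Lemma state_fixed_from k p : state k p -> fixed_from (permn p.2) k.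
Proof. by case: p => -[] s [sk _] //=; apply: fixed_fromW sk; apply: leq_pred. Qed.

Section OneStep.
Variables (M : nat) (b : bool) (s : {perm 'I_n}) (a : nat).
Hypotheses (M2n : M.+2 <= n) (a_ok : 0 < a < M.+2).

Lemma permn_step : permn (step M (b, s) (Some a)) =1
  swapn a.-1 (if b && hasfix s M.+1 a then M.+1 else M) \o permn s.
Proof. by move=> i; rewrite /step /=; case: ifP => _; rewrite permn_tr //; lia. Qed.

Lemma permn_step_top : state M.+1 (b, s) ->
  permn (step M (b, s) (Some a)) M.+1 = if b && hasfix s M.+1 a then a.-1 else M.+1.
Proof.
move/state_fixed_from => /= sM; rewrite permn_step /= sM //.
case: ifP => _; swapn_lia.
Qed.

Lemma permn_step_origin : state M.+1 (b, s) -> ~~ (b && hasfix s M.+1 a) ->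
  let t := permn (step M (b, s) (Some a)) in
  (low_origin t M <-> b = false) /\ (if b then t a.-1 = M else t M = a.-1).
Proof.
move=> sb nfix t; have tE : t =1 swapn a.-1 M \o permn s.
  by move=> i; rewrite /t permn_step (negbTE nfix).
clearbody t.
case: b sb nfix tE => [[sM sfix]|[sM sfix]] /= nfix tE.
  have sole : sole_fixpoint_below (permn s) M.+1 a.-1.
    by apply/sole_fixpointP => //; lia.
  by have [tA nlow] := high_origin_encode (@permn_inj _ s) tE sM sole.
by have [tM low] := low_origin_encode tE sM sfix.
Qed.

End OneStep.

Lemma step_state M p x : M.+2 <= n -> state M.+1 p -> letter_ok M.+2 p x ->
  state M.+2 (x != None, step M p x).
Proof.
case: p => b s; case: x => [a|] M2n sb; last by case: b sb.
move=> a_ok; rewrite /= in a_ok; have := permn_step b s M2n a_ok.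
move: (step _ _ _) => t tE; have sM := state_fixed_from sb; rewrite /= in sM.
rewrite /state /=; case: ifP tE => [/andP[_ /(hasfixP _ _ (ltnW M2n))[j [jM sj ja]]]|_] tE.
  split; first by apply: swapn_fixed_from tE _ (fixed_fromW _ sM); lia.
  by exists j; [lia|apply: swapn_fixpoint tE _ _ _ sj; lia].
split; first by apply: fixed_fromW (swapn_fixed_from tE _ sM) => //; lia.
by exists M.+1; [|apply: swapn_fixpoint tE _ _ _ (sM _ _)]; lia.
Qed.

Lemma step_inj M p p' x x' : M.+2 <= n -> state M.+1 p -> state M.+1 p' ->
  letter_ok M.+2 p x -> letter_ok M.+2 p' x' ->
  (x != None, step M p x) = (x' != None, step M p' x') -> p = p' /\ x = x'.
Proof.
case: p p' => b s [b' s']; case: x x' => [a|] [a'|] M2n sb sb' //; last first.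
  by move=> /= -> -> [->].
move=> a_ok a'_ok [tt0].
have tt' : step M (b, s) (Some a) = step M (b', s') (Some a') := tt0.
have top := permn_step_top M2n a_ok sb.
have top' := permn_step_top M2n a'_ok sb'; rewrite tt' in top.
rewrite /= in a_ok a'_ok; move: tt0.
case: ifP top => hb top; case: ifP top' => hb' top'; try lia.
  have aa : a = a' by lia.
  subst a'; move/mulIg ->.
  by case/andP: hb => -> _; case/andP: hb' => -> _.
have := permn_step_origin M2n a'_ok sb' (negbT hb').
have := permn_step_origin M2n a_ok sb (negbT hb); rewrite tt'.
clear sb sb' hb hb' top top' tt'.
case: b b' => [] [] [lo o] [lo' o'].
- have aa : a = a' by have := permn_inj (etrans o (esym o')); lia.
  by subst a'; move/mulIg ->.
- by have := proj1 lo (proj2 lo' erefl).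
- by have := proj1 lo' (proj2 lo erefl).
- have aa : a = a' by lia.
  by subst a'; move/mulIg ->.
Qed.

Definition step_preimage M q :=
  exists p x, [/\ state M.+1 p, letter_ok M.+2 p x & q = (x != None, step M p x)].

Section Preimage.
Variables (M : nat) (tau : {perm 'I_n}).
Hypotheses (M2n : M.+2 <= n) (tau_state : state M.+2 (true, tau)).

Lemma step_preimage_top : permn tau M.+1 != M.+1 -> step_preimage M (true, tau).
Proof.
case: tau_state => /= tM [j jM tj] /eqP tM1; set A := permn tau M.+1.
have AM : A <= M by have := fixed_from_lt (@permn_inj _ tau) tM (ltnSn M.+1); lia.
set s := (tau * tr n A.+1 M.+2)%g.
have sE : permn s =1 swapn A M.+1 \o permn tau by apply: permn_tr; lia.
have jA : j <> A by move=> jA; apply: tM1; apply: (@permn_inj _ tau); rewrite -/A -jA tj.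
have jM1 : j <> M.+1 by move=> jM1; apply: tM1; rewrite -jM1.
have sj := swapn_fixpoint sE jA jM1 tj.
have sfix : hasfix s M.+1 A.+1 by apply/hasfixP; [lia | exists j; split=> //; lia].
exists (true, s), (Some A.+1); split; last by rewrite /step /= sfix mul_trK.
- rewrite /state /=; split; last by exists j => //; lia.
  apply: fixed_fromS; first by rewrite sE /=; swapn_lia.
  by apply: swapn_fixed_from sE _ tM; lia.
- rewrite /=; lia.
Qed.

Lemma step_preimage_low : permn tau M.+1 = M.+1 -> low_origin (permn tau) M ->
  step_preimage M (true, tau).
Proof.
case: tau_state => /= tM _ tM1 low; have {}tM := fixed_fromS tM1 tM.
set A := permn tau M; have AM : A < M.+1 := fixed_from_lt (@permn_inj _ tau) tM (ltnSn M).
set s := (tau * tr n A.+1 M.+1)%g.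
have sE : permn s =1 swapn A M \o permn tau by apply: permn_tr; lia.
exists (false, s), (Some A.+1); split; last by rewrite /step /= mul_trK.
  exact: low_origin_decode (@permn_inj _ tau) sE erefl tM low.
rewrite /=; lia.
Qed.

Lemma step_preimage_high : permn tau M.+1 = M.+1 -> ~ low_origin (permn tau) M ->
  step_preimage M (true, tau).
Proof.
case: tau_state => /= tM _ tM1 nlow; have {}tM := fixed_fromS tM1 tM.
have [A tA] := permn_onto tau (ltnW M2n).
have AM : A <= M by rewrite leqNgt; apply/negP => MA; have := tM A MA; lia.
set s := (tau * tr n A.+1 M.+1)%g.
have sE : permn s =1 swapn A M \o permn tau by apply: permn_tr; lia.
have [sM sole] := high_origin_decode (@permn_inj _ tau) sE tM nlow tA.
have sfix : fixpoint_below (permn s) M.+1 by case: sole => ? ? _; exists A.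
have nfix : ~~ hasfix s M.+1 A.+1 := (sole_fixpointP (ltnW M2n) (ltn0Sn A) sfix).1 sole.
exists (true, s), (Some A.+1); split; last by rewrite /step /= (negbTE nfix) mul_trK.
  by split.
rewrite /=; lia.
Qed.

End Preimage.

Lemma step_surj M q : M.+2 <= n -> state M.+2 q -> step_preimage M q.
Proof.
case: q => -[] tau M2n tau_state; last by exists (true, tau), None.
have [tM1|tM1] := eqVneq (permn tau M.+1) M.+1; last exact: step_preimage_top.
have [low|nlow] := fixpoint_belowP (swapn (permn tau M) M \o permn tau) M.
  exact: step_preimage_low.
exact: step_preimage_high.
Qed.

Lemma state_Dbar p : state n p <-> p \in Dbar_union n.
Proof.
case: p => -[] s; rewrite /state inE /=.
  rewrite -(@eq_existsb _ (fun i : 'I_n => (i < n) && (s i == i))) => [|i];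
    last by rewrite ltn_ord.
  have belowP := permn_fixpoint_belowP s (leqnn n).
  split=> [[_ /belowP //] | /belowP sfix]; split=> // i; exact: permn_out.
have n1n := leq_pred n.
split=> [[/permn_fixed_fromP -> /(permn_fixpoint_belowP _ n1n) ->] //|].
by case/andP=> /permn_fixed_fromP ? /(permn_fixpoint_belowP _ n1n).
Qed.

End Step.

Definition letter (b a : nat) : option nat :=
  if a == b then None else if b < a then Some a else Some a.+1.

Definition unletter (b : nat) (x : option nat) : nat :=
  if x is Some c then (if b < c then c else c.-1) else b.

Lemma letter_None b a : (letter b a == None) = (a == b).
Proof. by rewrite /letter; have [|_] := eqVneq a b; last case: ltnP. Qed.

Lemma letterK b : cancel (letter b) (unletter b).
Proof.
move=> a; rewrite /letter; have [-> //|ab] := eqVneq a b.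
by case: ltnP => ba /=; [rewrite ba | rewrite ifN]; lia.
Qed.

Lemma unletterK b x : x != Some 0 -> letter b (unletter b x) = x.
Proof.
case: x => [c|] /=; last by rewrite /letter eqxx.
rewrite (inj_eq (@Some_inj _)) => c0; rewrite /letter.
case: ltnP => bc; first by rewrite ifN ?bc //; lia.
by rewrite !ifN; [congr Some | |]; lia.
Qed.

Lemma letter_range b a c k : b < k -> a <= k -> letter b a = Some c -> 0 < c <= k.
Proof.
rewrite /letter => bk ak; have [//|ab] := eqVneq a b.
by case: ltnP => ba [<-]; lia.
Qed.

Definition in_I000 m (f : nat -> nat) :=
  (forall j, 0 < j <= m -> f j < j) /\
  (forall j, 0 < j -> j.+2 <= m -> ~ (f j = f j.+1 /\ f j.+1 = f j.+2)).

Definition alternating_extension m (f : nat -> nat) j : nat :=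
  if j <= m then f j else odd (j - m) == (f m == 0).

Section AlternatingExtension.
Variables (m : nat) (f : nat -> nat).
Local Notation g := (alternating_extension m f).

Lemma alternating_extension_neq j : m <= j -> g j.+1 <> g j.
Proof.
move=> mj; rewrite /alternating_extension ifN; last by rewrite -ltnNge ltnS.
case: leqP => [jm | mj'].
  have -> : j = m by lia.
  by rewrite subSnn /=; case: eqP; lia.
by rewrite subSn ?(ltnW mj') // oddS; case: odd; case: (f m == 0).
Qed.

Lemma in_I000_extension n : 0 < m -> in_I000 m f -> in_I000 n g.
Proof.
move=> m0 [fb fn]; split=> [j /andP[j0 jn] | j j0 jn [E1 E2]].
  rewrite /alternating_extension; case: (leqP j m) => jm /=; first by apply: fb; lia.
  by case: (_ == _) => /=; lia.
case: (leqP j.+2 m) => [j2m|mj2]; last by apply: (alternating_extension_neq (j := j.+1)); lia.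
by apply: (fn j) => //; move: E1 E2; rewrite /alternating_extension !ifT //; lia.
Qed.

End AlternatingExtension.

Section Sequences.
Variable n : nat.
Implicit Types (e : n.-tuple 'I_n) (f : nat -> nat).

Lemma ev_tnth e (i : 'I_n) : ev e i.+1 = tnth e i.
Proof. by rewrite /ev /= (nth_map i) ?size_tuple // -tnth_nth. Qed.

Lemma ev_inj e e' : (forall j, 0 < j <= n -> ev e j = ev e' j) -> e = e'.
Proof.
move=> ee'; apply/eq_from_tnth => i; apply: val_inj.
by rewrite /= -!ev_tnth ee' //; have := ltn_ord i; lia.
Qed.

Lemma I000P e : reflect (in_I000 n (ev e)) (e \in I000 n).
Proof.
rewrite inE; apply: (iffP andP) => [[/forallP eb /forallP en] | [eb en]]; split.
- move=> j /andP[j0 jn]; have j1n : j.-1 < n by lia.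
  by have := eb (Ordinal j1n); rewrite /= prednK.
- move=> j j0 jn [e1 e2]; have j1n : j.-1 < n by lia.
  by have := en (Ordinal j1n); rewrite /= prednK // e1 e2 !eqxx jn.
- by apply/forallP => i; apply: eb; have := ltn_ord i; lia.
- apply/forallP => i; apply/implyP => i3; apply/negP => /andP[/eqP e1 /eqP e2].
  exact: (en i.+1).
Qed.

Lemma in_I000_tuple f : in_I000 n f ->
  exists2 e, e \in I000 n & forall j, 0 < j <= n -> ev e j = f j.
Proof.
move=> [fb fn]; pose e : n.-tuple 'I_n := [tuple insubd i (f i.+1) | i < n].
have eE j : 0 < j <= n -> ev e j = f j.
  move=> /andP[j0 jn]; have j1n : j.-1 < n by lia.
  rewrite -(prednK j0) -[j.-1]/(val (Ordinal j1n)) ev_tnth tnth_mktuple /= insubdK //.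
  by rewrite prednK //; have := fb j; lia.
exists e => //; apply/I000P; split=> [j jn | j j0 jn].
  by rewrite eE //; apply: fb.
by rewrite !eE; [exact: fn | lia | lia | lia].
Qed.

Lemma in_I000_realize m f : 0 < m <= n -> in_I000 m f ->
  exists2 e, e \in I000 n & forall j, 0 < j <= m -> ev e j = f j.
Proof.
move=> /andP[m0 mn] /(in_I000_extension n m0) /in_I000_tuple [e eI eE].
by exists e => // j jm; rewrite eE ?/alternating_extension ?ifT //; lia.
Qed.

End Sequences.

Section Phi.
Variable n : nat.
Implicit Types (e : n.-tuple 'I_n).

Definition Phi k e := (w e k != None, sigma e k).

Lemma PhiS e M : Phi M.+2 e = (w e M.+2 != None, step M (Phi M.+1 e) (w e M.+2)).
Proof. by []. Qed.

Lemma wE e M : w e M.+2 = letter (ev e M.+1) (ev e M.+2).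
Proof. by []. Qed.

Lemma w_eq_None e k : 0 < k -> (w e k.+1 == None) = (ev e k.+1 == ev e k).
Proof. by case: k => [//|k] _; rewrite wE letter_None. Qed.

Lemma Phi_local k e e' : (forall j, 0 < j <= k -> ev e j = ev e' j) -> Phi k e = Phi k e'.
Proof.
elim: k => [|[|M] IH] ee' //.
rewrite !PhiS !wE IH => [|j jM]; last by apply: ee'; lia.
by rewrite !ee' //; lia.
Qed.

Lemma w_letter_ok e M : e \in I000 n -> M.+2 <= n ->
  letter_ok M.+2 (Phi M.+1 e) (w e M.+2).
Proof.
move=> /I000P[eb en] M2n; rewrite /letter_ok wE.
case lE : letter => [c|].
  by apply: letter_range lE; [apply: eb | have := eb M.+2]; lia.
move/eqP: lE; rewrite letter_None => /eqP e21.
case: (posnP M) => [-> //|M0]; rewrite /= w_eq_None //.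
by apply/eqP => e10; apply: (en M M0 M2n); rewrite e21 e10.
Qed.

Lemma Phi_state e k : e \in I000 n -> k < n -> state k.+1 (Phi k.+1 e).
Proof.
move=> eI; elim: k => [_ | M IH Mn].
  by split; [move=> i _; apply: permn1 | exists 0; last apply: permn1].
by rewrite PhiS; apply: step_state; [| apply: IH | apply: w_letter_ok]; lia.
Qed.

Lemma Phi_inj e e' k : e \in I000 n -> e' \in I000 n -> k < n ->
  Phi k.+1 e = Phi k.+1 e' -> forall j, 0 < j <= k.+1 -> ev e j = ev e' j.
Proof.
move=> eI e'I; elim: k => [n0 _ j j1 | M IH Mn].
  have /I000P[eb _] := eI; have /I000P[e'b _] := e'I.
  have -> : j = 1 by lia.
  by have := eb 1; have := e'b 1; lia.
rewrite !PhiS => ee'.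
have [PhiM wM] := step_inj Mn (Phi_state eI (ltnW Mn)) (Phi_state e'I (ltnW Mn))
  (w_letter_ok eI Mn) (w_letter_ok e'I Mn) ee'.
have {}IH := IH (ltnW Mn) PhiM.
move=> j /andP[j0]; rewrite leq_eqVlt => /predU1P[->|jM]; last by apply: IH; lia.
have e1 : ev e M.+1 = ev e' M.+1 by apply: IH; lia.
by move: wM; rewrite !wE e1 => /(can_inj (letterK _)).
Qed.

Lemma extend_by_letter e M x : e \in I000 n -> M.+2 <= n ->
  letter_ok M.+2 (Phi M.+1 e) x ->
  exists2 e', e' \in I000 n & Phi M.+1 e' = Phi M.+1 e /\ w e' M.+2 = x.
Proof.
move=> /I000P[eb en] M2n x_ok.
have x0 : x != Some 0 by case: x x_ok => [[]|].
have unl : unletter (ev e M.+1) x < M.+2.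
  by have := eb M.+1; case: x x_ok {x0} => [a|] /=; first case: (ltnP (ev e M.+1) a); lia.
pose f j := if j <= M.+1 then ev e j else unletter (ev e M.+1) x.
have fI : in_I000 M.+2 f.
  split=> [j /andP[j0 jM] | j j0 jM [f01 f12]].
    rewrite /f; case: (leqP j M.+1) => [jM1|] /=; first by apply: eb; lia.
    by move=> Mj; have -> : j = M.+2 by lia.
  case: (leqP j.+2 M.+1) => [j2M|Mj2].
    have fE i : i <= M.+1 -> f i = ev e i by rewrite /f => ->.
    rewrite !fE in f01 f12; try lia.
    by apply: (en j j0) => //; lia.
  have jE : j = M by lia.
  move: j0 f01 f12; rewrite jE /f leqnSn leqnn ltnn /= => M0 f01.
  move/(congr1 (letter (ev e M.+1))); rewrite unletterK // /letter eqxx => xN.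
  by move: x_ok; rewrite -xN /= w_eq_None // f01 eqxx.
have [e' e'I e'E] : exists2 e', e' \in I000 n & forall j, 0 < j <= M.+2 -> ev e' j = f j.
  by apply: in_I000_realize fI; lia.
exists e' => //; split.
  by apply: Phi_local => j jM; rewrite e'E /f ?ifT //; lia.
rewrite wE !e'E; try lia.
by rewrite /f leqnn ltnn unletterK.
Qed.

Lemma Phi_surj k p : k < n -> state k.+1 p -> exists2 e, e \in I000 n & Phi k.+1 e = p.
Proof.
elim: k p => [|M IH] [b s] kn.
  rewrite /state /=; case: b => -[s1 [i i0 _]] //; rewrite (permn_fixed_from_1 s1).
  have [e eI _] : exists2 e, e \in I000 n & forall j, 0 < j <= 1 -> ev e j = 0.
    by apply: in_I000_realize; [lia | split=> [j|j j0 j1]; lia].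
  by exists e.
case/(step_surj kn) => p' [x [p'_state x_ok ->]].
have [e eI eE] := IH p' (ltnW kn) p'_state; rewrite -eE in x_ok.
have [e' e'I [ee' wx]] := extend_by_letter eI kn x_ok.
by exists e' => //; rewrite PhiS ee' wx eE.
Qed.

End Phi.

Lemma card_has_fixpoint m : #|[set s : {perm 'I_m} | [exists i, s i == i]]| = m`! - d m.
Proof.
rewrite cardsCs card_Sn /d; congr (_ - _); apply: eq_card => s.
by rewrite !inE negb_exists.
Qed.

Section LiftMax.
Variable m : nat.
Local Notation lift_pmax := (lift_perm (@ord_max m) ord_max).

Lemma lift_pmax_inj : injective lift_pmax.
Proof.
move=> s t st; apply/permP => k; apply: (@lift_inj _ ord_max).
by rewrite -!(lift_perm_lift ord_max) st.
Qed.

Lemma lift_pmax_onto (u : {perm 'I_m.+1}) :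
  u ord_max = ord_max -> u \in [set lift_pmax s | s in setT].
Proof.
move=> u_max.
suff -> : [set lift_pmax s | s in setT] = [set v : {perm 'I_m.+1} | v ord_max == ord_max].
  by rewrite inE u_max.
apply/eqP; rewrite eqEcard; apply/andP; split.
  by apply/subsetP => _ /imsetP[s _ ->]; rewrite inE lift_perm_id.
rewrite card_imset; last exact: lift_pmax_inj.
have -> : #|[set: {perm 'I_m}]| = #|perm_on [set~ (@ord_max m)]|.
  by rewrite cardsT card_Sn card_perm cardsC1 card_ord.
apply: subset_leq_card; apply/subsetP => v; rewrite !inE => /eqP v_max.
by apply/subsetP => i; rewrite !inE; apply: contraNneq => ->; rewrite v_max.
Qed.

Lemma lift_pmax_fixpoint s (i : 'I_m) :
  (lift_pmax s (lift ord_max i) == lift ord_max i) = (s i == i).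
Proof. by rewrite lift_perm_lift (inj_eq (@lift_inj _ ord_max)). Qed.

End LiftMax.

Lemma card_fixing_max_with_fixpoint m :
  #|[set u : {perm 'I_m.+1} | [forall i : 'I_m.+1, (m <= i) ==> (u i == i)] &&
                              [exists i : 'I_m.+1, (i < m) && (u i == i)]]| = m`! - d m.
Proof.
rewrite -card_has_fixpoint -(card_imset _ (@lift_pmax_inj m)).
apply: eq_card => u; rewrite inE; apply/andP/imsetP.
  case=> /forallP u_max /existsP[i /andP[im /eqP ui]].
  have /eqP umax := implyP (u_max ord_max) (leqnn m).
  have /imsetP[s _ us] := lift_pmax_onto umax.
  exists s => //; rewrite inE; apply/existsP; exists (Ordinal im).
  have li : lift ord_max (Ordinal im) = i by apply: val_inj; rewrite /= /bump leqNgt im.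
  by rewrite -lift_pmax_fixpoint -us li ui.
case=> s; rewrite inE => /existsP[k sk] ->; split.
  apply/forallP => i; apply/implyP => mi.
  have -> : i = ord_max by apply: val_inj; have := ltn_ord i; rewrite /=; lia.
  by rewrite lift_perm_id.
by apply/existsP; exists (lift ord_max k); rewrite lift_pmax_fixpoint sk lift_max ltn_ord.
Qed.

Lemma card_Dbar_union m : #|Dbar_union m.+1| = (m.+1`! - d m.+1) + (m`! - d m).
Proof.
rewrite -card_has_fixpoint -card_fixing_max_with_fixpoint.
set T := [set s | _]; set F := [set u | _].
have pair_inj (b : bool) : injective (@pair bool {perm 'I_m.+1} b) by move=> s t [].
have -> : Dbar_union m.+1 = pair true @: T :|: pair false @: F.
  apply/setP => -[b s]; rewrite !inE; apply/idP/orP.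
    by case: b => sD; [left | right]; apply/imsetP; exists s; rewrite ?inE.
  by case=> /imsetP[t]; rewrite inE => tTF [-> ->].
have disj : pair true @: T :&: pair false @: F = set0.
  by apply/setP => -[b s]; rewrite !inE; apply/andP => -[/imsetP[? _ [-> _]] /imsetP[? _ []]].
by rewrite cardsU disj cards0 subn0 !(card_imset _ (pair_inj _)).
Qed.

Theorem mainTheorem1 (n : nat) (hn : 0 < n) :
  [/\ {in I000 n, forall e, phi e \in Dbar_union n},
      {in I000 n &, injective (@phi n)},
      {in Dbar_union n, forall p, exists2 e, e \in I000 n & phi e = p}
    & #|I000 n| = (n`! - d n) + (n.-1`! - d n.-1)].
Proof.
case: n hn => [//|k] _.
have into : {in I000 k.+1, forall e, phi e \in Dbar_union k.+1}.
  by move=> e eI; apply/state_Dbar/Phi_state.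
have inj : {in I000 k.+1 &, injective (@phi k.+1)}.
  by move=> e e' eI e'I /(Phi_inj eI e'I (ltnSn k)) ee'; apply: ev_inj.
have onto : {in Dbar_union k.+1, forall p, exists2 e, e \in I000 k.+1 & phi e = p}.
  by move=> p /state_Dbar /(Phi_surj (ltnSn k)) [e eI <-]; exists e.
have img : [set phi e | e in I000 k.+1] = Dbar_union k.+1.
  apply/setP => p; apply/imsetP/idP => [[e eI ->] | /onto[e eI <-]]; first exact: into.
  by exists e.
by split=> //; rewrite /= -card_Dbar_union -img card_in_imset.
Qed.
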